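(* If $n\ge 3t+1$ and all honest processors have the same initial message $\boldsymbol M$, then in every execution of COOL every honest processor outputs $\boldsymbol M$ (validity).
   Context: Setting. $n$ processors indexed by $[1:n]$, pairwise joined by reliable private synchronous channels; recipients know senders. At most $t$ processors are dishonest, controlled by a Byzantine adversary of unbounded computational power knowing all inputs, who may make them deviate arbitrarily (missing values are replaced by a fixed default); the others are honest. Processor $i$ holds an $\ell$-bit initial message $\boldsymbol w_i$. $\phi$ is a default value different from every $\ell$-bit message. Logarithms are base 2. Code. $k=\lfloor t/5\rfloor+1$, $c=\lceil \max\{\ell,(t/5+1)\log(n+1)\}/k\rceil$. Messages are zero-padded to $kc$ bits and viewed in $GF(2^c)^k$. Integers in $[1:n]$ are identified with distinct nonzero elements of $GF(2^c)$; $\boldsymbol h_i\in GF(2^c)^k$ has entries $h_{i,j}=\prod_{p\in[1:k],\,p\ne j}\frac{i-p}{j-p}$ (field arithmetic). COOL (honest processor $i$). Initialization: updated message $\boldsymbol w^{(i)}:=\boldsymbol w_i$, $y^{(i)}_j:=\boldsymbol h_j^{\mathsf T}\boldsymbol w_i$ for $j\in[1:n]$, $u_i(i):=1$. Phase 1. (a) Send $(y^{(i)}_j,y^{(i)}_i)$ to each $j\ne i$. (b) For $j\ne i$, link indicator $u_i(j):=1$ if the pair received from $j$ equals $(y^{(i)}_i,y^{(i)}_j)$, else $0$. Success indicator $s_i:=1$ if $\sum_{j=1}^n u_i(j)\ge n-t$; otherwise $s_i:=0$ and $\boldsymbol w^{(i)}:=\phi$. (c) Send $s_i$ to all; each processor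 records the indicator received from each $j$ (own for itself) and forms $\mathcal S_1=\{j:s_j=1\}$, $\mathcal S_0=\{j:s_j=0\}$ (views may differ). Phase 2. If $s_i=1$: set $u_i(j):=0$ for all $j\in\mathcal S_0$; if now $\sum_j u_i(j)<n-t$, set $s_i:=0$, $\boldsymbol w^{(i)}:=\phi$, and send $s_i=0$ to all. Everyone overwrites recorded indicators with newly received ones and recomputes $\mathcal S_0,\mathcal S_1$. Phase 3. Repeat Phase 2 once more. Vote $v_i:=1$ if the recorded indicators satisfy $\sum_j s_j\ge 2t+1$, else $0$. Run on the votes a deterministic error-free binary Byzantine agreement protocol for $t<n/3$ (e.g. Berman–Garay–Perry or Coan–Welch), which guarantees all honest processors decide, decide equally, and decide the common honest vote when all honest votes agree. If the decision is $0$: set $\boldsymbol w^{(i)}:=\phi$, output $\phi$, stop. Phase 4 (decision 1). If $s_i=0$: replace $y^{(i)}_i$ by the most frequent value (fixed tie-breaking) among the first components of the Phase-1 pairs received from $j\in\mathcal S_1$; send it to each $j\in\mathcal S_0\setminus\{i\}$; with $z_i=y^{(i)}_i$, $z_j$ = value received from $j$ in Phase 4 for $j\in\mathcal S_0\setminus\{i\}$, $z_j$ = second component of the Phase-1 pair from $j$ for $j\in\mathcal S_1$, set $\boldsymbol w^{(i)}$ to a message $\boldsymbol x$ with $\boldsymbol h_j^{\mathsf T}\boldsymbol x=z_j$ for at least $n-t$ indices $j$ ($\phi$ if none). If $s_i=1$ keep $\boldsymbol w^{(i)}$. Output $\boldsymbol w^{(i)}$ and stop. *)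

(* Model of the COOL protocol (one execution, static Byzantine
   adversary, abstract binary BA black box). Processor i : 'I_n stands for the
   integer i+1 of [1:n]; similarly p : 'I_k stands for p+1 of [1:k]. *)
From HB Require Import structures.
From mathcomp Require Import all_boot all_order all_algebra.
Set Implicit Arguments. Unset Strict Implicit. Unset Printing Implicit Defensive.
Import Order.TTheory GRing.Theory.
Local Open Scope ring_scope.

Definition cool_k (t : nat) : nat := (t %/ 5 + 1)%N.

(* c is admissible iff k*c >= max{l, (t/5+1) log2 (n+1)};
   (t/5+1) log2(n+1) <= k c  <->  (n+1)^(t+5) <= 2^(5 k c).
   The paper's c = ceil(max{..}/k) is the least admissible c. *)
Definition cool_c_ok (n t l c : nat) : bool :=
  (l <= cool_k t * c)%N && ((n.+1) ^ (t + 5) <= 2 ^ (5 * cool_k t * c))%N.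

(* Messages from dishonest processors (sender j, receiver i): chosen
   arbitrarily by the adversary.  Phase 2/3 messages are optional (None = no
   message, recorded indicator unchanged). *)
Record adversary (n : nat) (F : Type) := Adversary {
  adv_p1 : 'I_n -> 'I_n -> F * F;
  adv_s1 : 'I_n -> 'I_n -> bool;
  adv_s2 : 'I_n -> 'I_n -> option bool;
  adv_s3 : 'I_n -> 'I_n -> option bool;
  adv_z4 : 'I_n -> 'I_n -> F
}.

Definition ba_spec (n : nat) (H : {set 'I_n}) (vote dec : 'I_n -> bool) : Prop :=
  (forall i j, i \in H -> j \in H -> dec i = dec j) /\
  (forall v, (forall i, i \in H -> vote i = v) -> forall i, i \in H -> dec i = v).

Section COOL.
Variables (F : finFieldType) (n t l c : nat).
Variable alpha : nat -> F.               (* identification [1:n] -> GF(2^c) *)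
Variable b2f : c.-tuple bool -> F.
Variable defF : F.                       (* default for missing symbols *)
Variable H : {set 'I_n}.                 (* honest processors *)
Variable win : 'I_n -> l.-tuple bool.
Variable A : adversary n F.

Local Notation k := (cool_k t).

Definition hcoef (i : 'I_n) (j : 'I_k) : F :=
  \prod_(p < k | p != j) ((alpha i - alpha p) / (alpha j - alpha p)).

Definition code (x : 'rV[F]_k) (j : 'I_n) : F := \sum_(m < k) hcoef j m * x 0 m.

(* zero-pad to k*c bits, cut into k blocks of c bits, each read in GF(2^c) *)
Definition enc (w : l.-tuple bool) : 'rV[F]_k :=
  \row_(m < k) b2f [tuple nth false w (m * c + b)%N | b < c].

Definition y (i j : 'I_n) : F := code (enc (win i)) j.

Definition rp1 (i j : 'I_n) : F * F :=
  if j \in H then (y j i, y j j) else adv_p1 A j i.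
Definition u1 (i j : 'I_n) : bool :=
  if j == i then true else rp1 i j == (y i i, y i j).
Definition s1 (i : 'I_n) : bool := (n - t <= #|[set j | u1 i j]|)%N.
Definition rs1 (i j : 'I_n) : bool :=
  if j == i then s1 i else if j \in H then s1 j else adv_s1 A j i.

Definition u2 (i j : 'I_n) : bool := u1 i j && rs1 i j.
Definition s2 (i : 'I_n) : bool := s1 i && (n - t <= #|[set j | u2 i j]|)%N.
Definition m2 (i j : 'I_n) : option bool :=
  if j \in H then (if s1 j && ~~ s2 j then Some false else None) else adv_s2 A j i.
Definition rs2 (i j : 'I_n) : bool :=
  if j == i then s2 i else if m2 i j is Some b then b else rs1 i j.

Definition u3 (i j : 'I_n) : bool := u2 i j && rs2 i j.
Definition s3 (i : 'I_n) : bool := s2 i && (n - t <= #|[set j | u3 i j]|)%N.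
Definition m3 (i j : 'I_n) : option bool :=
  if j \in H then (if s2 j && ~~ s3 j then Some false else None) else adv_s3 A j i.
Definition rs3 (i j : 'I_n) : bool :=
  if j == i then s3 i else if m3 i j is Some b then b else rs2 i j.

Definition vote (i : 'I_n) : bool := (2 * t + 1 <= #|[set j | rs3 i j]|)%N.

Variable dec : 'I_n -> bool.

Definition maj (i : 'I_n) : F :=
  [arg max_(x > (0 : F)) #|[set j | rs3 i j && ((rp1 i j).1 == x)]| ]%O.

Definition recv4 (i j : 'I_n) : F :=
  if j \in H then
    (if dec j && ~~ s3 j && ~~ rs3 j i && (i != j) then maj j else defF)
  else adv_z4 A j i.

Definition z (i j : 'I_n) : F :=
  if j == i then maj i else if ~~ rs3 i j then recv4 i j else (rp1 i j).2.

(* output; None stands for phi *)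
Definition cool_output (i : 'I_n) : option (l.-tuple bool) :=
  if ~~ dec i then None
  else if s3 i then Some (win i)
  else [pick x : l.-tuple bool | (n - t <= #|[set j | code (enc x) j == z i j]|)%N].

End COOL.

(* With a common honest message all honest processors compute the same code
   symbols, so every honest-honest link check succeeds.  As at least n - t
   processors are honest, each honest processor keeps its success indicator
   1 through Phases 1-3 and never announces 0; hence it sees at least
   n - t >= 2t + 1 ones and votes 1.  By validity of Byzantine agreement the
   decision is 1, and an honest processor with s = 1 outputs its own
   message. *)
From HB Require Import structures.
From mathcomp Require Import all_boot all_order all_algebra.
From mathcomp Require Import zify.
Set Implicit Arguments. Unset Strict Implicit. Unset Printing Implicit Defensive.

Lemma card_sub_compl_leq (T : finType) (t : nat) (S : {set T}) (P : pred T) :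
  #|~: S| <= t -> {in S, forall x, P x} -> #|T| - t <= #|[set x | P x]|.
Proof.
move=> Sc_le PS; have S_sub : S \subset [set x | P x].
  by apply/subsetP => x Sx; rewrite inE PS.
apply: leq_trans (subset_leq_card S_sub).
by move: (cardsC S) Sc_le; lia.
Qed.

Section HonestUnanimity.

Variables (F : finFieldType) (n t l c : nat).
Variables (alpha : nat -> F) (b2f : c.-tuple bool -> F).
Variables (H : {set 'I_n}) (win : 'I_n -> l.-tuple bool) (M : l.-tuple bool).
Variable A : adversary n F.

Hypothesis dishonest_le : #|~: H| <= t.
Hypothesis win_honest : {in H, forall i, win i = M}.

Local Notation y := (y t alpha b2f win).
Local Notation u1 := (u1 t alpha b2f H win A).
Local Notation s1 := (s1 t alpha b2f H win A).
Local Notation rs1 := (rs1 t alpha b2f H win A).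
Local Notation s2 := (s2 t alpha b2f H win A).
Local Notation rs2 := (rs2 t alpha b2f H win A).
Local Notation s3 := (s3 t alpha b2f H win A).
Local Notation rs3 := (rs3 t alpha b2f H win A).
Local Notation vote := (vote t alpha b2f H win A).

Lemma quorum_honest (P : pred 'I_n) :
  {in H, forall j, P j} -> n - t <= #|[set j | P j]|.
Proof.
by move=> PH; rewrite -[n in n - t]card_ord; apply: card_sub_compl_leq PH.
Qed.

Lemma y_honest i j : i \in H -> y i j = code alpha (enc t b2f M) j.
Proof. by move=> Hi; rewrite /y win_honest. Qed.

Lemma u1_honest i j : i \in H -> j \in H -> u1 i j.
Proof.
move=> Hi Hj; rewrite /u1 /rp1 Hj; case: eqP => // _.
by rewrite !y_honest.
Qed.

Lemma s1_honest i : i \in H -> s1 i.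
Proof. by move=> Hi; apply: quorum_honest => j; apply: u1_honest. Qed.

Lemma rs1_honest i j : i \in H -> j \in H -> rs1 i j.
Proof. by move=> Hi Hj; rewrite /rs1 Hj !s1_honest //; case: eqP. Qed.

Lemma s2_honest i : i \in H -> s2 i.
Proof.
move=> Hi; rewrite /s2 s1_honest //=; apply: quorum_honest => j Hj.
by rewrite /u2 u1_honest // rs1_honest.
Qed.

Lemma rs2_honest i j : i \in H -> j \in H -> rs2 i j.
Proof.
move=> Hi Hj; rewrite /rs2 /m2 Hj; case: eqP => _; first exact: s2_honest.
by rewrite s2_honest // s1_honest //= rs1_honest.
Qed.

Lemma s3_honest i : i \in H -> s3 i.
Proof.
move=> Hi; rewrite /s3 s2_honest //=; apply: quorum_honest => j Hj.
by rewrite /u3 /u2 u1_honest // rs1_honest // rs2_honest.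
Qed.

Lemma rs3_honest i j : i \in H -> j \in H -> rs3 i j.
Proof.
move=> Hi Hj; rewrite /rs3 /m3 Hj; case: eqP => _; first exact: s3_honest.
by rewrite s3_honest // s2_honest //= rs2_honest.
Qed.

Lemma vote_honest i : 3 * t + 1 <= n -> i \in H -> vote i.
Proof.
move=> n_ge Hi; rewrite /vote.
have := @quorum_honest (rs3 i) (fun j => rs3_honest Hi); apply: leq_trans; lia.
Qed.

End HonestUnanimity.

Theorem lemma5
  (F : finFieldType) (n t l c : nat)
  (alpha : nat -> F) (b2f : c.-tuple bool -> F) (defF : F)
  (H : {set 'I_n}) (win : 'I_n -> l.-tuple bool) (M : l.-tuple bool)
  (A : adversary n F) (dec : 'I_n -> bool) :
  3 * t + 1 <= n ->
  #|~: H| <= t ->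
  cool_c_ok n t l c ->
  (forall c', cool_c_ok n t l c' -> c <= c') ->
  #|F| = 2 ^ c ->
  bijective b2f ->
  {in [pred x | x < n] &, injective alpha} ->
  (forall x, x < n -> alpha x != 0%R) ->
  (forall i, i \in H -> win i = M) ->
  ba_spec H (vote t alpha b2f H win A) dec ->
  forall i, i \in H -> cool_output t alpha b2f defF H win A dec i = Some M.
Proof.
move=> n_ge dishonest_le _ _ _ _ _ _ win_honest [_ ba_valid] i Hi.
have vote_H := vote_honest alpha b2f A dishonest_le win_honest n_ge.
have dec_i : dec i by apply: ba_valid Hi => j; apply: vote_H.
have s3_i := s3_honest alpha b2f A dishonest_le win_honest Hi.
by rewrite /cool_output dec_i s3_i win_honest.
Qed.
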